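(* For every integer $d\ge 1$, \[ \sum_{m=1}^{d} q^{\binom{m}{2}}(1-q^m) \begin{bmatrix}2d\\ d+m\end{bmatrix}_q=\frac{1-q^d}{1+q^d} \begin{bmatrix}2d\\ d\end{bmatrix}_q. \]
   Context: Notation: $(a;q)_n=(1-a)(1-aq)\cdots(1-aq^{n-1})$ and $\begin{bmatrix}n\\k\end{bmatrix}_q=\frac{(q;q)_n}{(q;q)_k(q;q)_{n-k}}$ for $n\ge k\ge0$ and $0$ otherwise. *)

From mathcomp Require Import all_boot all_order all_algebra fraction.
Set Implicit Arguments. Unset Strict Implicit. Unset Printing Implicit Defensive.
Import GRing.Theory.
Local Open Scope ring_scope.

Definition qpoch (R : nzRingType) (a q : R) (n : nat) : R :=
  \prod_(i < n) (1 - a * q ^+ i).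

Definition qbinom (F : fieldType) (q : F) (n k : nat) : F :=
  if (k <= n)%N then qpoch q q n / (qpoch q q k * qpoch q q (n - k)) else 0.

Definition RatFun := {fraction {poly rat}}.
Definition qvar : RatFun := FracField.tofrac ('X : {poly rat}).

(* Write B_m for [2d, d+m]_q.  The ratio B_{m+1} (1 - q^(d+m+1)) = B_m (1 - q^(d-m))
   shows that A_m = q^C(m+1,2) (q^(d-m) - 1) B_m satisfies
   A_{m+1} - A_m = (1 + q^d) q^C(m+1,2) (1 - q^(m+1)) B_{m+1},
   so (1 + q^d) times the sum telescopes to A_d - A_0 = (1 - q^d) B_0. *)

From mathcomp Require Import all_boot all_order all_algebra fraction.
From mathcomp Require Import ring.
Local Open Scope ring_scope.
Import GRing.Theory.

Section QBinomial.
Variables (F : fieldType) (q : F).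
Hypothesis q_not_root1 : forall k, (0 < k)%N -> q ^+ k != 1.

Lemma one_sub_qexp_neq0 k : (0 < k)%N -> 1 - q ^+ k != 0.
Proof. by move=> k_gt0; rewrite subr_eq0 eq_sym q_not_root1. Qed.

Lemma one_add_qexp_neq0 k : (0 < k)%N -> 1 + q ^+ k != 0.
Proof.
move=> k_gt0; have := @one_sub_qexp_neq0 (2 * k); rewrite muln_gt0 k_gt0 => /(_ isT).
have -> : 1 - q ^+ (2 * k) = (1 - q ^+ k) * (1 + q ^+ k) by rewrite mulnC exprM; ring.
by apply: contraNneq => ->; rewrite mulr0.
Qed.

Lemma qpochS n : qpoch q q n.+1 = qpoch q q n * (1 - q ^+ n.+1).
Proof. by rewrite /qpoch big_ord_recr /= exprS. Qed.

Lemma qpoch_neq0 n : qpoch q q n != 0.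
Proof.
elim: n => [|n IHn]; first by rewrite /qpoch big_ord0 oner_neq0.
by rewrite qpochS mulf_neq0 ?one_sub_qexp_neq0.
Qed.

Lemma qbinomS_mul n k : (k < n)%N ->
  qbinom q n k.+1 * (1 - q ^+ k.+1) = qbinom q n k * (1 - q ^+ (n - k)).
Proof.
move=> lt_kn; rewrite /qbinom lt_kn (ltnW lt_kn).
have -> : (n - k = (n - k.+1).+1)%N by rewrite subnSK.
by rewrite !qpochS; field; rewrite !qpoch_neq0 !one_sub_qexp_neq0.
Qed.

Definition qbinom_antidiff d m :=
  q ^+ 'C(m.+1, 2) * (q ^+ (d - m) - 1) * qbinom q (2 * d) (d + m).

Lemma qbinom_antidiffS d m : (m < d)%N ->
  qbinom_antidiff d m.+1 - qbinom_antidiff d m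
  = (1 + q ^+ d) * (q ^+ 'C(m.+1, 2) * (1 - q ^+ m.+1) * qbinom q (2 * d) (d + m.+1)).
Proof.
move=> lt_md; rewrite /qbinom_antidiff.
have lt_2d : (d + m < 2 * d)%N by rewrite mul2n -addnn ltn_add2l.
have := @qbinomS_mul (2 * d) (d + m) lt_2d; rewrite -addnS.
have -> : (2 * d - (d + m) = d - m)%N by rewrite mul2n -addnn subnDl.
move=> ratio.
have -> : q ^+ 'C(m.+1, 2) * (q ^+ (d - m) - 1) * qbinom q (2 * d) (d + m)
    = - (q ^+ 'C(m.+1, 2) * (qbinom q (2 * d) (d + m.+1) * (1 - q ^+ (d + m.+1)))).
  by rewrite ratio; ring.
have [j ->] : exists j, d = (m.+1 + j)%N by exists (d - m.+1)%N; rewrite subnKC.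
have -> : 'C(m.+2, 2) = ('C(m.+1, 2) + m.+1)%N by rewrite binS bin1.
by rewrite addKn !exprD; ring.
Qed.


Lemma sum_qbinom_above_center d :
  \sum_(1 <= m < d.+1) q ^+ 'C(m, 2) * (1 - q ^+ m) * qbinom q (2 * d) (d + m)
  = (1 - q ^+ d) / (1 + q ^+ d) * qbinom q (2 * d) d.
Proof.
case: d => [|d]; first by rewrite big_geq // subrr !mul0r.
have qd_neq0 := @one_add_qexp_neq0 d.+1 isT.
rewrite mulrAC; apply: (mulIf qd_neq0); rewrite divfK //.
rewrite mulr_suml big_add1 /=.
rewrite (@telescope_sumr_eq _ 0 d.+1 (qbinom_antidiff d.+1)) //; last first.
  by move=> m /andP[_ lt_md]; rewrite qbinom_antidiffS // mulrC.
by rewrite /qbinom_antidiff subnn subn0 addn0 expr0 subrr mulr0 mul0r sub0r mul1r -mulNr opprB.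
Qed.
End QBinomial.

Lemma qvar_not_root1 k : (0 < k)%N -> qvar ^+ k != 1.
Proof.
move=> k_gt0; rewrite /qvar -tofracXn -tofrac1 tofrac_eq.
apply: contraTneq k_gt0 => /(congr1 (fun p : {poly rat} => size p)).
by rewrite size_polyXn size_poly1 => -[->].
Qed.

Theorem corollary1p5 (d : nat) : (1 <= d)%N ->
  \sum_(1 <= m < d.+1)
     qvar ^+ 'C(m, 2) * (1 - qvar ^+ m) * qbinom qvar (2 * d) (d + m)
  = (1 - qvar ^+ d) / (1 + qvar ^+ d) * qbinom qvar (2 * d) d.
Proof. by move=> _; apply: sum_qbinom_above_center; exact: qvar_not_root1. Qed.
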